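(* Let $n\ge 2$ and let $p=a_1a_2\cdots a_n$ be a permutation of $\{1,\dots,n\}$ such that $a_{j+1}=a_j+1$ for some $j\in\{1,\dots,n-1\}$. Let $\hat p|_{\{a_j\}}$ denote the permutation of $\{1,\dots,n-1\}$ that is order-isomorphic to the sequence obtained from $p$ by deleting the entry $a_j$. Then $p$ is achievable by two stacks in series if and only if $\hat p|_{\{a_j\}}$ is achievable by two stacks in series.
   Context: Two stacks in series: a machine with an input stream, a first stack, a second stack and an output stream, with three moves: $\rho$ moves the next element of the input onto the top of the first stack; $\lambda$ moves the top element of the first stack onto the top of the second stack; $\mu$ moves the top element of the second stack to the end of the output. A permutation $q$ of $\{1,\dots,m\}$ is achievable if, starting with input $1,2,\dots,m$ (in this order) and both stacks empty, some finite sequence of these moves ends with empty input, empty stacks, and output equal to $q$. *)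

From mathcomp Require Import all_boot.
Set Implicit Arguments. Unset Strict Implicit. Unset Printing Implicit Defensive.

(* A configuration of the machine: (input, first stack, second stack, output).
   Stacks are lists with the top element at the head; the output is read left
   to right, new elements are appended at the end. *)
Definition config := (seq nat * seq nat * seq nat * seq nat)%type.

Inductive move : config -> config -> Prop :=
| move_rho x inp s1 s2 out :
    move (x :: inp, s1, s2, out) (inp, x :: s1, s2, out)
| move_lambda x inp s1 s2 out :
    move (inp, x :: s1, s2, out) (inp, s1, x :: s2, out)
| move_mu x inp s1 s2 out :
    move (inp, s1, x :: s2, out) (inp, s1, s2, rcons out x).

Inductive reach : config -> config -> Prop :=
| reach_refl c : reach c c
| reach_step c1 c2 c3 : move c1 c2 -> reach c2 c3 -> reach c1 c3.

Definition achievable (q : seq nat) : Prop :=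
  reach (iota 1 (size q), [::], [::], [::]) ([::], [::], [::], q).

Definition is_perm (m : nat) (q : seq nat) : Prop := perm_eq q (iota 1 m).

Definition delete_at (i : nat) (s : seq nat) : seq nat :=
  take i s ++ drop i.+1 s.

Definition order_iso (s t : seq nat) : Prop :=
  size s = size t /\
  forall i k, i < size s -> k < size s ->
    (nth 0 s i < nth 0 s k) = (nth 0 t i < nth 0 t k).

(* The machine never inspects the values it moves, so erasing the entry a_j
   from every configuration of a run and relabelling the rest order-
   preservingly yields a run for the reduced permutation. Conversely, in a
   run for the reduced permutation, let the entry a_j + 1 be shadowed by a
   companion a_j standing just before it: every move of a_j + 1 is preceded
   by the same move of a_j, so the two travel together (in reversed order
   while on the first stack) and the run becomes a run for p. *)

From mathcomp Require Import all_boot zify.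

Set Implicit Arguments.
Unset Strict Implicit.
Unset Printing Implicit Defensive.

Definition mapc (f : nat -> nat) (c : config) : config :=
  let: (inp, s1, s2, out) := c in (map f inp, map f s1, map f s2, map f out).

Lemma reach_mapc f c1 c2 : reach c1 c2 -> reach (mapc f c1) (mapc f c2).
Proof.
elim=> [c|c c' c'' hmove _ IH]; first exact: reach_refl.
apply: (reach_step _ IH).
by case: hmove => x inp s1 s2 out /=; rewrite ?map_rcons; constructor.
Qed.

Definition filterc (a : pred nat) (c : config) : config :=
  let: (inp, s1, s2, out) := c in
  (filter a inp, filter a s1, filter a s2, filter a out).

Lemma reach_filterc a c1 c2 : reach c1 c2 -> reach (filterc a c1) (filterc a c2).
Proof.
elim=> [c|c c' c'' hmove _ IH]; first exact: reach_refl.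
move: IH; case: hmove => x inp s1 s2 out /=; rewrite ?filter_rcons;
  case: (a x) => IH //; apply: (reach_step _ IH); constructor.
Qed.

Definition insert_before (u w : nat) (s : seq nat) : seq nat :=
  flatten [seq if x == w then [:: u; w] else [:: x] | x <- s].

Definition insert_after (u w : nat) (s : seq nat) : seq nat :=
  flatten [seq if x == w then [:: w; u] else [:: x] | x <- s].

(* [u] is pushed onto the first stack just before [w], so it lies below [w],
   i.e. after it in the top-first list. *)
Definition insertc (u w : nat) (c : config) : config :=
  let: (inp, s1, s2, out) := c in
  (insert_before u w inp, insert_after u w s1,
   insert_before u w s2, insert_before u w out).

Lemma reach_insertc u w c1 c2 :
  reach c1 c2 -> reach (insertc u w c1) (insertc u w c2).
Proof.
elim=> [c|c c' c'' hmove _ IH]; first exact: reach_refl.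
move: IH; case: hmove => x inp s1 s2 out;
  rewrite /= /insert_before /insert_after /= ?map_rcons ?flatten_rcons;
  case: eqP => _ /= IH.
- by do 2![apply: reach_step; first constructor].
- by apply: (reach_step _ IH); constructor.
- by do 2![apply: reach_step; first constructor].
- by apply: (reach_step _ IH); constructor.
- do 2![apply: reach_step; first constructor].
  by rewrite -!cats1 -catA.
- by apply: (reach_step _ IH); rewrite cats1; constructor.
Qed.

Lemma count_ltn_iota x a k :
  count (fun y => y < x) (iota a k) = minn (x - a) k.
Proof.
elim: k a => [|k IH] a /=; first by rewrite minn0.
by rewrite IH; case: ltnP => /= hx; lia.
Qed.

Lemma is_perm_nth_rank m s i : is_perm m s -> i < size s ->
  nth 0 s i = (count (fun k => nth 0 s k < nth 0 s i) (iota 0 (size s))).+1.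
Proof.
move=> ps hi.
have : nth 0 s i \in iota 1 m by rewrite -(perm_mem ps) mem_nth.
rewrite mem_iota => /andP[hx1 hx2].
rewrite -(count_map (nth 0 s) (fun y => y < nth 0 s i)) -/(mkseq _ _) mkseq_nth.
by rewrite (permP ps) count_ltn_iota; lia.
Qed.

Lemma order_iso_perm_eq m s t :
  is_perm m s -> is_perm m t -> order_iso s t -> s = t.
Proof.
move=> ps pt [sz iso]; apply: (eq_from_nth (x0 := 0)) => // i hi.
rewrite (is_perm_nth_rank ps hi) (is_perm_nth_rank pt) -?sz //.
congr S; apply: eq_in_count => k; rewrite mem_iota => /andP[_ hk].
exact: iso.
Qed.

Lemma ltn_unbump2 h i k :
  i != h -> k != h -> (unbump h i < unbump h k) = (i < k).
Proof.
move=> ih kh; rewrite -{2}(unbumpK ih) -{2}(unbumpK kh).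
by rewrite !ltnNge leq_bump2.
Qed.

Lemma order_iso_unbump h s t :
  h \notin s -> order_iso s t -> order_iso (map (unbump h) s) t.
Proof.
move=> hs [sz iso]; split; first by rewrite size_map.
move=> i k; rewrite size_map => hi hk.
have neq_h l : l < size s -> nth 0 s l != h.
  by move=> hl; apply: contraNneq hs => <-; exact: mem_nth.
by rewrite !(nth_map 0) // ltn_unbump2 ?neq_h // iso.
Qed.

Lemma filter_predC1_id (v : nat) s : v \notin s -> filter (predC1 v) s = s.
Proof. by move=> vs; apply/all_filterP; rewrite all_predC has_pred1. Qed.

Lemma map_bumpK_filter v s :
  map (bump v) (map (unbump v) (filter (predC1 v) s)) = filter (predC1 v) s.
Proof.
rewrite -map_comp -[RHS]map_id; apply/eq_in_map => x.
by rewrite mem_filter => /andP[xv _]; exact: unbumpK.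
Qed.

Lemma map_unbump_filter_iota v n : 0 < v <= n ->
  map (unbump v) (filter (predC1 v) (iota 1 n)) = iota 1 n.-1.
Proof.
case/andP=> v_gt0 v_le_n.
have below : map (unbump v) (iota 1 v.-1) = iota 1 v.-1.
  rewrite -[RHS]map_id; apply/eq_in_map => x; rewrite mem_iota => hx.
  by rewrite /unbump; lia.
have above : map (unbump v) (iota v.+1 (n - v)) = iota v (n - v).
  rewrite -add1n iotaDl -map_comp -[RHS]map_id; apply/eq_in_map => x.
  by rewrite mem_iota /= /unbump; lia.
have v_notin_below : v \notin iota 1 v.-1 by rewrite mem_iota; lia.
have v_notin_above : v \notin iota v.+1 (n - v) by rewrite mem_iota; lia.
rewrite -[n in iota 1 n](_ : v.-1 + (n - v).+1 = n); last by lia.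
rewrite iotaD add1n prednK //= filter_cat /= eqxx !filter_predC1_id //.
rewrite map_cat below above -[in RHS](_ : v.-1 + (n - v) = n.-1); last by lia.
by rewrite iotaD add1n prednK.
Qed.

Lemma filter_predC1_cat_uniq (v : nat) A B :
  uniq (A ++ v :: B) -> filter (predC1 v) (A ++ v :: B) = A ++ B.
Proof.
rewrite uniq_catC /= mem_cat negb_or => /andP[/andP[vB vA] _].
by rewrite filter_cat /= eqxx !filter_predC1_id.
Qed.

Lemma is_perm_unbump_delete n v A B :
  is_perm n (A ++ v :: B) -> is_perm n.-1 (map (unbump v) (A ++ B)).
Proof.
move=> ps; have : v \in iota 1 n by rewrite -(perm_mem ps) mem_cat mem_head orbT.
rewrite mem_iota => hv.
rewrite -(@filter_predC1_cat_uniq v A B) ?(perm_uniq ps) ?iota_uniq //.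
by rewrite /is_perm -(@map_unbump_filter_iota v n); [apply/perm_map/perm_filter | lia].
Qed.

Lemma insert_before_id u w s : w \notin s -> insert_before u w s = s.
Proof.
elim: s => //= x s IH; rewrite inE negb_or => /andP[xw /IH {2}<-].
by rewrite /insert_before /= eq_sym (negbTE xw).
Qed.

Lemma insert_before_delete_uniq u w A B :
  uniq (A ++ u :: w :: B) ->
  insert_before u w (filter (predC1 u) (A ++ u :: w :: B)) = A ++ u :: w :: B.
Proof.
move=> uAB; rewrite filter_predC1_cat_uniq //.
move: uAB; rewrite uniq_catC /= mem_cat negb_or => /and3P[_ /andP[wB wA] _].
by rewrite /insert_before map_cat flatten_cat /= eqxx -!/(insert_before u w _)
  !insert_before_id.
Qed.

Lemma iota_adjacent v n : 0 < v < n ->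
  iota 1 n = iota 1 v.-1 ++ v :: v.+1 :: iota v.+2 (n - v.+1).
Proof.
move=> hv; rewrite -[n in iota 1 n](_ : v.-1 + (n - v.+1).+2 = n); last by lia.
by rewrite iotaD add1n prednK //; case/andP: hv.
Qed.

Lemma achievable_delete_succ n v A B :
  is_perm n (A ++ v :: v.+1 :: B) ->
  achievable (A ++ v :: v.+1 :: B) <-> achievable (map (unbump v) (A ++ v.+1 :: B)).
Proof.
set p := A ++ _ => pp.
have up : uniq p by rewrite (perm_uniq pp) iota_uniq.
have hv : 0 < v < n.
  have : v.+1 \in iota 1 n by rewrite -(perm_mem pp) !(mem_cat, inE) eqxx !orbT.
  have : v \in iota 1 n by rewrite -(perm_mem pp) !(mem_cat, inE) eqxx !orbT.
  by rewrite !mem_iota; lia.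
have hq := is_perm_unbump_delete pp.
rewrite /achievable (perm_size pp) (perm_size hq) !size_iota.
rewrite -(filter_predC1_cat_uniq up) -(@map_unbump_filter_iota v n); last by lia.
split=> run.
- by have /= := reach_mapc (unbump v) (reach_filterc (predC1 v) run).
- have := reach_insertc v v.+1 (reach_mapc (bump v) run).
  rewrite /= !map_bumpK_filter [iota 1 n](iota_adjacent hv).
  by rewrite !insert_before_delete_uniq // -iota_adjacent // iota_uniq.
Qed.

Theorem mainTheorem1 (n : nat) (p : seq nat) (j : nat) (q : seq nat) :
  2 <= n ->
  is_perm n p ->
  j.+1 < n ->
  nth 0 p j.+1 = (nth 0 p j).+1 ->
  is_perm n.-1 q ->
  order_iso (delete_at j p) q ->
  (achievable p <-> achievable q).
Proof.
move=> _ pp jn hsucc pq iso.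
set v := nth 0 p j in hsucc.
set A := take j p; set B := drop j.+2 p.
have jp : j.+1 < size p by rewrite (perm_size pp) size_iota.
have dropE : drop j.+1 p = v.+1 :: B by rewrite (drop_nth 0) // hsucc.
have pE : p = A ++ v :: v.+1 :: B.
  by rewrite -dropE -(drop_nth 0) ?cat_take_drop // ltnW.
have deleteE : delete_at j p = A ++ v.+1 :: B by rewrite /delete_at dropE.
rewrite pE in pp *; rewrite deleteE in iso.
have v_notin : v \notin A ++ v.+1 :: B.
  rewrite -(@filter_predC1_cat_uniq v) ?mem_filter /= ?eqxx //.
  by rewrite (perm_uniq pp) iota_uniq.
have -> : q = map (unbump v) (A ++ v.+1 :: B).
  apply/esym/(order_iso_perm_eq (is_perm_unbump_delete pp) pq).
  exact: order_iso_unbump.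
exact: achievable_delete_succ pp.
Qed.
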